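(* Let $A\subset\mathbb{R}^2$ be a set which is not totally disconnected, i.e. $A$ has a connected component which is not a singleton. Then $A+S^1$ has non-empty interior.
   Context: $S^1$ is the Euclidean unit circle in $\mathbb{R}^2$; $X+Y=\{x+y:x\in X,y\in Y\}$. *)

From HB Require Import structures.
From mathcomp Require Import all_boot all_order all_algebra.
From mathcomp Require Import all_classical all_reals all_analysis.
Set Implicit Arguments. Unset Strict Implicit. Unset Printing Implicit Defensive.
Import Order.TTheory GRing.Theory Num.Theory.
Import numFieldNormedType.Exports.
Local Open Scope classical_set_scope.
Local Open Scope ring_scope.

(* The plane R^2 is modelled as R * R with the product topology
   (= the Euclidean topology). *)

Definition unit_circle (R : realType) : set (R * R) :=
  [set p | p.1 ^+ 2 + p.2 ^+ 2 = 1].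

Definition minkowski_sum (R : realType) (X Y : set (R * R)) : set (R * R) :=
  [set z | exists x y, X x /\ Y y /\ z = (x.1 + y.1, x.2 + y.2)].
Arguments unit_circle R : clear implicits.

From HB Require Import structures.
From mathcomp Require Import all_boot all_order all_algebra.
From mathcomp Require Import all_classical all_reals all_analysis.
From mathcomp Require Import ring lra.
Import Order.TTheory GRing.Theory Num.Theory.
Import numFieldNormedType.Exports.
Local Open Scope classical_set_scope.
Local Open Scope ring_scope.

(* Pick two distinct points p, q in one connected component C of A.  If a
   point z is at distance < 1 from p and > 1 from q, the distance from z
   varies continuously along the connected set C, so it equals 1 at some
   c in C, i.e. z = c + (z - c) lies in A + S^1.  These points z form an
   open set, which is non-empty: take z on the line through p and q, on the
   side of p away from q. *)

Lemma not_totally_disconnectedP (T : topologicalType) (A : set T) :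
  ~ totally_disconnected A ->
  exists p q, [/\ A p, connected_component A p q & q <> p].
Proof.
move=> ntd; apply: contrapT => nopq; apply: ntd => p Ap.
apply/seteqP; split=> [q Cq|_ ->]; last exact: connected_component_refl.
by apply: contrapT => qp; apply: nopq; exists p, q.
Qed.

Lemma connected_IVT {T : topologicalType} {R : realType} {C : set T}
    {f : T -> R} {a b : T} {r : R} :
  connected C -> continuous f -> C a -> C b -> f a <= r <= f b ->
  exists2 c, C c & f c = r.
Proof.
move=> cC cf Ca Cb far.
have /connected_intervalP fC : connected (f @` C).
  by apply: connected_continuous_connected => //; exact: continuous_subspaceT.
by have [c] := fC _ _ (imageP f Ca) (imageP f Cb) r far; exists c.
Qed.

Lemma exists_scale_sqr_lt1_gt1 (R : rcfType) (D : R) :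
  0 < D -> exists t : R, t ^+ 2 * D < 1 < (1 + t) ^+ 2 * D.
Proof.
move=> D_gt0; have [D_gt1|D_le1] := ltrP 1 D.
  by exists 0; rewrite expr0n mul0r addr0 expr1n mul1r ltr01.
pose s := Num.sqrt D.
have s_gt0 : 0 < s by rewrite sqrtr_gt0.
have s_le1 : s <= 1 by rewrite -sqrtr1 ler_sqrt.
have <- : s ^+ 2 = D by rewrite sqr_sqrtr // ltW.
exists (s^-1 - 2^-1); rewrite -!exprMn.
have -> : (s^-1 - 2^-1) * s = 1 - s / 2 by field; rewrite gt_eqF.
have -> : (1 + (s^-1 - 2^-1)) * s = 1 + s / 2 by field; rewrite gt_eqF.
by apply/andP; split; nra.
Qed.

Section plane.
Context {R : realType}.
Implicit Types (a b p q z : R * R) (X Y Z C : set (R * R)).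

Lemma minkowski_sumSl X Y Z :
  X `<=` Y -> minkowski_sum X Z `<=` minkowski_sum Y Z.
Proof. by move=> XY _ [x [y [Xx [Zy ->]]]]; exists x, y; split; first exact: XY. Qed.

Definition sqdist a b : R :=
  (a.1 - b.1) ^+ 2 + (a.2 - b.2) ^+ 2.

Lemma sqdistC a b : sqdist a b = sqdist b a.
Proof. by rewrite /sqdist; ring. Qed.

Lemma continuous_sqdist p : continuous (sqdist ^~ p).
Proof.
move=> z.
have sqr_shift_cont (f : R * R -> R) c : {for z, continuous f} ->
    {for z, continuous (fun w => (f w - c) ^+ 2)}.
  move=> fz; apply: (continuous_comp _ (@exprn_continuous R 2 _)).
  by apply: (@continuousB _ _ _ f (fun=> c)) => //; exact: cst_continuous.
apply: (@continuousD _ _ _ (fun w => (w.1 - p.1) ^+ 2) (fun w => (w.2 - p.2) ^+ 2)).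
  by apply: sqr_shift_cont; exact: cvg_fst.
by apply: sqr_shift_cont; exact: cvg_snd.
Qed.

Lemma sqdist_gt0 p q : p <> q -> 0 < sqdist p q.
Proof.
case: p q => [a b] [c d] pq; rewrite /sqdist /=.
have [ac|ac] := eqVneq a c.
  have bd : b != d by apply/eqP => bd; apply: pq; rewrite ac bd.
  by rewrite ac subrr expr0n add0r exprn_even_gt0 //= subr_eq0.
by rewrite ltr_pwDl ?sqr_ge0 // exprn_even_gt0 //= subr_eq0.
Qed.

Lemma lune_sub_minkowski_sum {C p q} :
  connected C -> C p -> C q ->
  [set z | sqdist z p < 1 < sqdist z q] `<=` minkowski_sum C (unit_circle R).
Proof.
move=> cC Cp Cq z /andP[zp zq].
have [c Cc zc1] : exists2 c, C c & sqdist c z = 1.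
  apply: (connected_IVT cC (continuous_sqdist z) Cp Cq).
  by rewrite sqdistC (sqdistC q) !ltW.
exists c, (z.1 - c.1, z.2 - c.2); split=> //; split.
  by rewrite /unit_circle /= -zc1 sqdistC.
by rewrite /= !subrKC -surjective_pairing.
Qed.

Lemma open_lune p q :
  open [set z | sqdist z p < 1 < sqdist z q].
Proof.
have -> : [set z | sqdist z p < 1 < sqdist z q] =
    (sqdist ^~ p) @^-1` [set x | x < 1] `&` (sqdist ^~ q) @^-1` [set x | 1 < x].
  by apply/seteqP; split=> z /=; [move/andP | move=> [-> ->]].
by apply: openI; apply: open_comp; do ?[exact: open_lt | exact: open_gt];
  move=> z _; exact: continuous_sqdist.
Qed.

Lemma exists_lune_point p q :
  p <> q -> exists z, sqdist z p < 1 < sqdist z q.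
Proof.
move=> /sqdist_gt0 /exists_scale_sqr_lt1_gt1 [t].
pose z := (p.1 + t * (p.1 - q.1), p.2 + t * (p.2 - q.2)); exists z.
have zp : sqdist z p = t ^+ 2 * sqdist p q by rewrite /sqdist /=; ring.
have zq : sqdist z q = (1 + t) ^+ 2 * sqdist p q by rewrite /sqdist /=; ring.
by rewrite zp zq.
Qed.

End plane.

Theorem mainTheorem8 (R : realType) (A : set (R * R)) :
  ~ totally_disconnected A ->
  (minkowski_sum A (unit_circle R))° !=set0.
Proof.
move=> /not_totally_disconnectedP [p [q [Ap Cq qp]]].
have lune_sub : [set z | sqdist z p < 1 < sqdist z q] `<=`
                minkowski_sum A (unit_circle R).
  apply: subset_trans (lune_sub_minkowski_sum (@component_connected _ A p)
    (connected_component_refl Ap) Cq) _.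
  exact: minkowski_sumSl (@connected_component_sub _ A p).
have [z lune_z] := exists_lune_point p q (nesym qp).
exists z; apply: filterS lune_sub _.
by apply: open_nbhs_nbhs; split; [exact: open_lune | exact: lune_z].
Qed.
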